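(* Let $f:M\to M$ possess a CMZ structure and fix $\beta>0$. (b) If $\mu_Y(\sigma>n)=O(e^{-an})$ for some $a>0$ and $\mu_X(h>n)\ge cn^{-\beta}$ for some $c>0$ and all $n\ge1$, then there exists $c'>0$ such that $\mu_Y(\varphi>n)\ge c'(\log n)^{-1}n^{-\beta}$ for all sufficiently large $n$. For every $\varepsilon>0$ there exists $q>1$ (depending on $\beta,\varepsilon$) such that, if $\mu_Y(\sigma>n)=O(n^{-q})$, then: (c) if $\mu_X(h>n)=O(n^{-\beta})$ then $\mu_Y(\varphi>n)=O(n^{-(\beta-\varepsilon)})$; (d) if $\mu_X(h>n)\ge cn^{-\beta}$ for some $c>0$, then there exists $c'>0$ with $\mu_Y(\varphi>n)\ge c'n^{-(\beta+\varepsilon)}$ for all $n\ge1$.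
   Context: CMZ structure: $f:M\to M$ ergodic mixing measure-preserving on a probability space $(M,\mu)$; measurable $Y\subset X\subset M$, $\mu(Y)>0$; $h:X\to\mathbb Z^+$ the integrable first return time of $f$ to $X$, $f_X=f^h$, $\mu_X=\mu|_X/\mu(X)$; an integrable $\sigma:Y\to\mathbb Z^+$ constant on elements of a countable partition $\alpha$ such that $F=f_X^\sigma:Y\to Y$ is a full-branch Gibbs–Markov map with invariant probability $\mu_Y$; $f_X$ is modelled by the Young tower $Y^\sigma$ (the map $(y,\ell)\mapsto f_X^\ell y$, $0\le\ell<\sigma(y)$, pushes $(\mu_Y\times\text{counting})/\int\sigma\,d\mu_Y$ to $\mu_X$); $h$ is constant on $f_X^\ell(a)$ for $a\in\alpha$, $0\le\ell<\sigma(a)$; and $\varphi(y)=\sum_{\ell=0}^{\sigma(y)-1}h(f_X^\ell y)$ is the induced return time. *)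

From HB Require Import structures.
From mathcomp Require Import all_boot all_order all_algebra.
From mathcomp Require Import all_classical all_reals all_analysis.
Set Implicit Arguments. Unset Strict Implicit. Unset Printing Implicit Defensive.
Import Order.TTheory GRing.Theory Num.Theory.
Import numFieldNormedType.Exports.
Local Open Scope classical_set_scope.
Local Open Scope ring_scope.

Section CMZ.
Context {d : measure_display} {M : measurableType d} {R : realType}.

Definition first_return_map (f : M -> M) (h : M -> nat) : M -> M :=
  fun x => iter (h x) f x.

Definition induced_map (f : M -> M) (h : M -> nat) (sigma : M -> nat) : M -> M :=
  fun y => iter (sigma y) (first_return_map f h) y.

Definition induced_return_time (f : M -> M) (h : M -> nat) (sigma : M -> nat)
  : M -> nat :=
  fun y => (\sum_(l < sigma y) h (iter l (first_return_map f h) y))%N.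

Definition cond_measure (mu : probability M R) (X : set M) (A : set M) : \bar R :=
  (mu (A `&` X) * ((fine (mu X))^-1)%:E)%E.

Definition same_elem (alpha : set (set M)) (x y : M) : Prop :=
  exists2 a, alpha a & a x /\ a y.

(* F^k x and F^k y lie in the same partition element for all k < n,
   i.e. the separation time s(x,y) is at least n *)
Definition sep_ge (alpha : set (set M)) (F : M -> M) (n : nat) (x y : M) : Prop :=
  forall k, (k < n)%N -> same_elem alpha (iter k F x) (iter k F y).

Definition full_branch_GM (Y : set M) (alpha : set (set M)) (F : M -> M)
    (muY : probability M R) : Prop :=
  [/\
      [/\ countable alpha,
      (forall a, alpha a -> measurable a /\ (0 < muY a)%E),
      trivIset alpha id &
      \bigcup_(a in alpha) a = Y],
      muY (~` Y) = 0%E /\ (forall A, measurable A -> muY (F @^-1` A) = muY A),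
      (forall a, alpha a -> set_bij a Y F /\ measurable_fun a F) &
      (* Jacobian g = 1/zeta, zeta = d muY / d(muY o F), with log zeta
         locally Lipschitz for d_theta = theta^s *)
      exists g : M -> R,
        (forall y, 0 < g y) /\
        (forall a, alpha a -> forall E, measurable E -> E `<=` a ->
            measurable (F @` E) /\
            muY (F @` E) = (\int[muY]_(x in E) (g x)%:E)%E) /\
        exists (C theta : R), 0 < theta < 1 /\
          forall a, alpha a -> forall x y, a x -> a y -> forall n,
            sep_ge alpha F n x y ->
            `|ln (g x)^-1 - ln (g y)^-1| <= C * theta ^+ n ].

Definition CMZ (mu : probability M R) (f : M -> M) (X Y : set M) (h : M -> nat)
    (alpha : set (set M)) (sigma : M -> nat) (muY : probability M R) : Prop :=
  let fX := first_return_map f h in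
  [/\
      [/\ measurable_fun setT f, (forall A, measurable A -> mu (f @^-1` A) = mu A),
      (forall A, measurable A -> f @^-1` A = A -> mu A = 0%E \/ mu A = 1%E) &
      (forall A B, measurable A -> measurable B ->
         (fun n => fine (mu (iter n f @^-1` A `&` B))) @ \oo
           --> fine (mu A) * fine (mu B))],
      [/\ measurable X, measurable Y, Y `<=` X & (0 < mu Y)%E],
      (forall x, X x -> [/\ (0 < h x)%N, X (iter (h x) f x) &
                           forall k, (0 < k < h x)%N -> ~ X (iter k f x)]) /\
      (\int[mu]_(x in X) ((h x)%:R)%:E < +oo)%E,
      [/\ (forall y, Y y -> (0 < sigma y)%N),
          (forall a, alpha a -> forall x y, a x -> a y -> sigma x = sigma y),
          (\int[muY]_(y in Y) ((sigma y)%:R)%:E < +oo)%E &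
          full_branch_GM Y alpha (induced_map f h sigma) muY] &
      ((* the Young tower Y^sigma models f_X: the map (y,l) |-> f_X^l y pushes
         (muY x counting)/int sigma dmuY to mu_X *)
      (forall A, measurable A ->
         ((\int[muY]_(y in Y) ((sigma y)%:R)%:E) * cond_measure mu X A)%E =
         (\sum_(0 <= l <oo) muY [set y | Y y /\ (l < sigma y)%N /\ A (iter l fX y)])%E) /\
      (forall a, alpha a -> forall l x y, a x -> a y -> (l < sigma x)%N ->
          h (iter l fX x) = h (iter l fX y))) ].

End CMZ.

From HB Require Import structures.
From mathcomp Require Import all_boot all_order all_algebra.
From mathcomp Require Import all_classical all_reals all_analysis.
From mathcomp.algebra_tactics Require Import ring lra.
Set Implicit Arguments. Unset Strict Implicit. Unset Printing Implicit Defensive.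
Import Order.TTheory GRing.Theory Num.Theory.
Import numFieldNormedType.Exports.
Local Open Scope classical_set_scope.
Local Open Scope ring_scope.

(* The Young tower identity spreads mu_X over the levels {(y, l) : l < sigma y}
   of the tower over Y, with total mass int sigma >= 1, and a level point (y, l)
   with h(f_X^l y) > m has phi(y) > m.  Splitting the levels at l = L gives
     mu_X(h > m) <= L mu_Y(phi > m) + sum_{l >= L} mu_Y(sigma > l),
   and since phi is a sum of sigma(y) return times,
     mu_Y(phi > n) <= mu_Y(sigma > L) + (int sigma) mu_X(h > n / L).
   The lower bounds follow by taking L of order log n (exponential tails of
   sigma) or n^eps (polynomial tails), the upper bound by taking L of order
   n^(eps / (beta + eps)); the polynomial tail exponent of sigma only has to
   beat (beta + 1 + beta^2) / eps. *)

Section RealAsymptotics.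
Variable R : realType.
Implicit Types (a beta eps c K : R) (p : nat -> R).

Lemma ltr_nat_truncn (y : R) n : (Num.truncn y < n)%N -> y < n%:R.
Proof. by case: n => // n; rewrite ltnS truncn_le_nat. Qed.

Lemma exists_nat_gt_le (N : nat) (y : R) : 0 <= y ->
  exists L : nat, [/\ (N <= L)%N, y < L%:R & L%:R <= N%:R + y + 1].
Proof.
move=> y0; exists (maxn N (Num.truncn y).+1); split.
- exact: leq_maxl.
- by apply: ltr_nat_truncn; rewrite leq_max ltnSn orbT.
- have : (maxn N (Num.truncn y).+1 <= N + (Num.truncn y).+1)%N.
    by rewrite geq_max leq_addr leq_addl.
  rewrite -(ler_nat R) natrD -natr1 => /le_trans; apply.
  by rewrite addrA lerD2r lerD2l truncn_le.
Qed.

Lemma divn_gtr (n L : nat) : (0 < L)%N -> n%:R / L%:R - 1 < (n %/ L)%:R :> R.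
Proof.
move=> L0; have L0R : 0 < L%:R :> R by rewrite ltr0n.
by rewrite ltrBlDr ltr_pdivrMr // natr1 -natrM ltr_nat ltn_ceil.
Qed.

Lemma powR_natE (n : nat) (x : R) : (0 < n)%N -> n%:R `^ x = expR (x * ln n%:R).
Proof. by move=> n0; rewrite /powR gt_eqF // ltr0n. Qed.

Lemma ler_powR_of_ler_inv (n : nat) (r A : R) : 0 < r -> 0 <= A ->
  A `^ r^-1 <= n%:R -> A <= n%:R `^ r.
Proof.
move=> r0 A0 hA; rewrite -[X in X <= _](powRr1 A0).
rewrite -[X in A `^ X <= _](mulVf (lt0r_neq0 r0)) powRrM.
by apply: ge0_ler_powR hA; rewrite ?nnegrE ?powR_ge0 ?(ltW r0).
Qed.

Lemma ler_powRN_succ_half (n : nat) beta K c :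
  0 <= K -> 0 < c -> (1 <= n)%N -> 2 * K / c < n%:R ->
  K * n%:R `^ (- (beta + 1)) <= c / 2 * n%:R `^ (- beta).
Proof.
move=> K0 c0 n1 hn; have n0 : 0 < n%:R :> R by rewrite ltr0n.
rewrite opprD powRD; last by rewrite (gt_eqF n0) implybT.
rewrite powR_inv1 // mulrCA (mulrC (c / 2)).
apply: ler_wpM2l; first exact: powR_ge0.
rewrite ler_pdivrMr //; move: hn; rewrite ltr_pdivrMr // => hn; lra.
Qed.

Lemma powR_nat_ge1 (n : nat) (z : R) : (1 <= n)%N -> 0 <= z -> 1 <= n%:R `^ z.
Proof.
move=> n1 z0; rewrite -[X in X <= _](powRr0 n%:R).
by apply: ler_powR; rewrite ?ler1n.
Qed.

Lemma powRN_nat_le1 (n : nat) (z : R) : (1 <= n)%N -> 0 <= z -> n%:R `^ (- z) <= 1.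
Proof. by move=> n1 z0; rewrite powRN invf_le1 ?powR_nat_ge1 // powR_gt0 // ltr0n. Qed.

Lemma powR_natX (n k : nat) (z : R) : (n%:R `^ z) ^+ k = n%:R `^ (z * k%:R).
Proof. by rewrite powRrM powR_mulrn // powR_ge0. Qed.

Lemma ler_powR_natN (n : nat) (r s : R) : (1 <= n)%N -> s <= r ->
  n%:R `^ (- r) <= n%:R `^ (- s).
Proof. by move=> n1 sr; apply: ler_powR; rewrite ?ler1n ?lerN2. Qed.

Lemma invXn_le_powR (k n L : nat) delta : (1 <= n)%N -> 0 <= delta ->
  n%:R `^ delta <= L%:R -> (L%:R ^+ k)^-1 <= n%:R `^ (- (delta * k%:R)) :> R.
Proof.
move=> n1 d0 yL; have y0 : 0 < n%:R `^ delta by rewrite powR_gt0 // ltr0n.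
have L0 : 0 < L%:R :> R := lt_le_trans y0 yL.
rewrite powRN -powR_natX lef_pV2 ?posrE ?exprn_gt0 //.
by rewrite lerXn2r // nnegrE ltW.
Qed.

Lemma ler_split_lower (c g u T L B : R) : 0 < c -> 0 < g -> 0 < L -> L <= B ->
  c * g <= L * u + T -> T <= c / 2 * g -> c * g / (2 * B) <= u.
Proof.
move=> c0 g0 L0 LB hsplit small.
have Lu : c / 2 * g <= L * u by lra.
have u0 : 0 <= u.
  rewrite -(pmulr_rge0 u L0); apply: le_trans Lu.
  by rewrite mulr_ge0 ?divr_ge0 // ltW.
have B0 : 0 < B by exact: lt_le_trans LB.
rewrite ler_pdivrMr ?mulr_gt0 //.
have : L * u <= B * u by rewrite ler_wpM2r.
lra.
Qed.

Lemma lower_log_of_split a beta c K (N : nat) p :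
  0 < a -> 0 <= beta -> 0 < c -> 0 <= K ->
  (forall n L : nat, (1 <= n)%N -> (N <= L)%N ->
      c * n%:R `^ (- beta) <= L%:R * p n + K * expR (- (a * L%:R))) ->
  exists c', 0 < c' /\ exists N' : nat, forall n, (N' <= n)%N ->
      c' * (ln n%:R)^-1 * n%:R `^ (- beta) <= p n.
Proof.
move=> a0 b0 c0 K0 split_at.
pose C := (beta + 1) / a; pose D := N%:R + 1 + C.
have C0 : 0 < C by rewrite divr_gt0 //; lra.
have D0 : 0 < D by rewrite /D; have := ler0n R N; lra.
exists (c / (2 * D)); split; first by rewrite divr_gt0 // mulr_gt0.
exists (maxn (Num.truncn (expR 1 : R)).+1 (Num.truncn (2 * K / c)).+1) => n.
rewrite geq_max => /andP[/ltr_nat_truncn ne /ltr_nat_truncn nK].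
have n0R : 0 < n%:R :> R by exact: lt_trans (expR_gt0 1) ne.
have n0 : (0 < n)%N by rewrite -(ltr0n R).
set x := ln n%:R.
have x1 : 1 < x by rewrite -[X in X < _](expRK 1) ltr_ln ?posrE ?expR_gt0 ?ltr0n.
have [L [NL CxL LDx]] := exists_nat_gt_le N (ltW (mulr_gt0 C0 (lt_trans ltr01 x1))).
have {LDx} LDx : L%:R <= D * x by rewrite /D; have := ler0n R N; nra.
have L0 : 0 < L%:R :> R by apply: lt_trans CxL; rewrite mulr_gt0 // (lt_trans ltr01).
(* [L >= C ln n] makes the exponential tail of [sigma] beat [n^-(beta+1)] *)
have small : K * expR (- (a * L%:R)) <= c / 2 * n%:R `^ (- beta).
  apply: le_trans (ler_powRN_succ_half beta K0 c0 n0 nK).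
  rewrite powR_natE // ler_wpM2l // ler_expR -/x.
  have aC : a * C = beta + 1 by rewrite /C mulrCA divff ?mulr1 // gt_eqF.
  nra.
apply: le_trans (ler_split_lower c0 (powR_gt0 _ n0R) L0 LDx (split_at n L n0 NL) small).
rewrite le_eqVlt; apply/predU1P; left.
by field; rewrite !gt_eqF // (lt_trans ltr01 x1).
Qed.

Lemma lower_poly_of_split beta eps c K (N k : nat) p :
  0 < eps -> 0 < c -> 0 <= K -> beta + 1 <= eps * k%:R ->
  (forall n L : nat, (1 <= n)%N -> (N <= L)%N -> (0 < L)%N ->
      c * n%:R `^ (- beta) <= L%:R * p n + K / L%:R ^+ k) ->
  exists c', 0 < c' /\ exists N' : nat, forall n, (N' <= n)%N ->
      c' * n%:R `^ (- (beta + eps)) <= p n.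
Proof.
move=> e0 c0 K0 hk split_at.
pose G := N%:R + 3 : R.
have G0 : 0 < G by rewrite /G; have := ler0n R N; lra.
exists (c / (2 * G)); split; first by rewrite divr_gt0 // mulr_gt0.
exists (Num.truncn (2 * K / c)).+1 => n /ltr_nat_truncn nK.
have n0R : 0 < n%:R :> R.
  by apply: le_lt_trans nK; rewrite divr_ge0 ?mulr_ge0 // ltW.
have n0 : (0 < n)%N by rewrite -(ltr0n R).
set y := n%:R `^ eps.
have y1 : 1 <= y by rewrite powR_nat_ge1 // ltW.
have [L [NL yL LNy]] := exists_nat_gt_le (maxn N 1) (le_trans ler01 y1).
have L0 : (0 < L)%N by apply: leq_trans NL; rewrite leq_maxr.
have L0R : 0 < L%:R :> R by rewrite ltr0n.
have LGy : L%:R <= G * y.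
  have : (maxn N 1)%:R <= N%:R + 1 :> R by rewrite natr1 ler_nat geq_max leqnSn.
  by rewrite /G; nra.
(* [L > n^eps] makes the polynomial tail of [sigma] beat [n^-(beta+1)] *)
have small : K / L%:R ^+ k <= c / 2 * n%:R `^ (- beta).
  apply: le_trans (ler_powRN_succ_half beta K0 c0 n0 nK).
  apply: (ler_wpM2l K0); apply: le_trans (invXn_le_powR k n0 (ltW e0) (ltW yL)) _.
  exact: ler_powR_natN.
apply: le_trans (ler_split_lower c0 (powR_gt0 _ n0R) L0R LGy
  (split_at n L n0 (leq_trans (leq_maxl _ _) NL) L0) small).
rewrite le_eqVlt; apply/predU1P; left.
have -> : n%:R `^ (- (beta + eps)) = n%:R `^ (- beta) / y.
  rewrite opprD powRD; last by rewrite (gt_eqF n0R) implybT.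
  by rewrite [n%:R `^ (- eps)]powRN.
by field; rewrite !gt_eqF // (lt_le_trans ltr01 y1).
Qed.

Lemma lower_bound_extend z c (N : nat) p : 0 <= z -> 0 < c ->
  {homo p : m n / (m <= n)%N >-> n <= m} ->
  (forall n, (N <= n)%N -> c * n%:R `^ (- z) <= p n) ->
  exists c', 0 < c' /\ forall n, (1 <= n)%N -> c' * n%:R `^ (- z) <= p n.
Proof.
move=> z0 c0 p_anti lower.
pose N1 := maxn N 1.
have N1_ge1 : (1 <= N1)%N by rewrite leq_maxr.
exists (c * N1%:R `^ (- z)); split; first by rewrite mulr_gt0 // powR_gt0 // ltr0n.
move=> n n1; have [N1n|nN1] := leqP N1 n.
  apply: le_trans (lower n (leq_trans (leq_maxl _ _) N1n)).
  rewrite -mulrA ler_pM2l // ler_piMl ?powR_ge0 //.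
  by rewrite powRN_nat_le1.
apply: le_trans (p_anti _ _ (ltnW nN1)); apply: le_trans (lower _ (leq_maxl _ _)).
by rewrite ler_piMr ?mulr_ge0 ?powR_ge0 ?(ltW c0) // powRN_nat_le1.
Qed.

Lemma powRN_le_of_le_mul (m z b a : R) : 0 < z -> 0 < a -> 0 <= b -> z <= a * m ->
  m `^ (- b) <= a `^ b * z `^ (- b).
Proof.
move=> z0 a0 b0 zam; have m0 : 0 < m by rewrite -(pmulr_rgt0 _ a0) (lt_le_trans z0).
have zb0 : 0 < z `^ b by exact: powR_gt0.
rewrite !powRN ler_pdivlMr // mulrC ler_pdivrMr ?powR_gt0 //.
rewrite -powRM ?(ltW a0) ?(ltW m0) //.
by apply: ge0_ler_powR zam; rewrite // nnegrE ltW // mulr_gt0.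
Qed.

Lemma exists_nat_split_power (n : nat) (delta : R) : (0 < n)%N ->
  1 <= n%:R `^ delta -> 6 <= n%:R `^ (1 - delta) ->
  exists L : nat, [/\ n%:R `^ delta < L%:R, L%:R <= 2 * n%:R `^ delta &
    n%:R `^ (1 - delta) / 3 < (n %/ L)%:R].
Proof.
set y := n%:R `^ delta; set z := n%:R `^ (1 - delta); move=> n0 y1 z6.
have n0R : 0 < n%:R :> R by rewrite ltr0n.
have nyz : n%:R = y * z.
  rewrite -powRD; last by rewrite (gt_eqF n0R) implybT.
  by rewrite addrC subrK powRr1 // ltW.
have [L [_ yL Ly]] := exists_nat_gt_le 0 (le_trans ler01 y1).
rewrite mulr0n add0r in Ly.
have L0R : 0 < L%:R :> R by exact: le_lt_trans (le_trans ler01 y1) yL.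
have L0 : (0 < L)%N by rewrite -(ltr0n R).
have L2y : L%:R <= 2 * y by lra.
exists L; split => //.
have := divn_gtr n L0.
have : z / 2 <= n%:R / L%:R.
  rewrite ler_pdivlMr // nyz.
  have z2 : 0 <= z / 2 by lra.
  have := ler_wpM2l z2 L2y; lra.
lra.
Qed.

Lemma balanced_exponents_ge beta eps (k : R) : 0 < beta -> 0 < eps ->
  beta ^+ 2 <= eps * k ->
  beta - eps <= eps / (beta + eps) * k /\
  beta - eps <= (1 - eps / (beta + eps)) * beta.
Proof.
move=> b0 e0; rewrite expr2 => hk; have be0 : 0 < beta + eps by rewrite addr_gt0.
have -> : 1 - eps / (beta + eps) = beta / (beta + eps) by field; rewrite gt_eqF.
by split; rewrite mulrAC ler_pdivlMr //; nra.
Qed.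

Lemma upper_poly_of_split beta eps (S K KH : R) (N Nh k : nat) p :
  0 < beta -> 0 < eps -> 0 <= S -> 0 <= K -> 0 <= KH ->
  beta ^+ 2 <= eps * k%:R ->
  (forall n L : nat, (0 < L)%N -> (N <= L)%N -> (Nh <= n %/ L)%N ->
      p n <= K / L%:R ^+ k + S * (KH * (n %/ L)%:R `^ (- beta))) ->
  exists (K' : R) (N' : nat), forall n, (N' <= n)%N ->
      p n <= K' * n%:R `^ (- (beta - eps)).
Proof.
move=> b0 e0 S0 K0 KH0 hk split_at.
(* [L ~ n^delta] balances the two terms of the split *)
pose delta := eps / (beta + eps).
have be0 : 0 < beta + eps by rewrite addr_gt0.
have delta0 : 0 < delta by rewrite divr_gt0.
have delta1_gt0 : 0 < 1 - delta by rewrite subr_gt0 ltr_pdivrMr // mul1r ltrDr.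
pose A1 := N%:R + 1 : R; pose A2 := 6 * (Nh%:R + 1) : R.
have A1_ge1 : 1 <= A1 by rewrite /A1; have := ler0n R N; lra.
have A2_ge6 : 6 <= A2 by rewrite /A2; have := ler0n R Nh; lra.
exists (K + S * KH * 3 `^ beta).
exists (maxn (Num.truncn (A1 `^ delta^-1)) (Num.truncn (A2 `^ (1 - delta)^-1))).+1.
move=> n; rewrite gtn_max => /andP[/ltr_nat_truncn nA1 /ltr_nat_truncn nA2].
have yA1 := ler_powR_of_ler_inv delta0 (le_trans ler01 A1_ge1) (ltW nA1).
have zA2 := ler_powR_of_ler_inv delta1_gt0 (le_trans (ler0n R 6) A2_ge6) (ltW nA2).
have n0 : (0 < n)%N.
  by rewrite -(ltr0n R); apply: le_lt_trans nA1; exact: powR_ge0.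
have [L [yL L2y zm]] := exists_nat_split_power n0 (le_trans A1_ge1 yA1)
  (le_trans A2_ge6 zA2).
move: yA1 zA2 yL L2y zm; set y := n%:R `^ delta; set z := n%:R `^ (1 - delta).
set m := (n %/ L)%N => yA1 zA2 yL L2y zm.
have n1 : (1 <= n)%N by [].
have L0 : (0 < L)%N.
  by rewrite -(ltr0n R); apply: le_lt_trans yL; exact: powR_ge0.
have NL : (N <= L)%N by apply: ltnW; rewrite -(ltr_nat R); rewrite /A1 in yA1; lra.
have Nhm : (Nh < m)%N.
  by rewrite -(ltr_nat R); rewrite /A2 in zA2; have := ler0n R Nh; lra.
have [rate1 rate2] := balanced_exponents_ge b0 e0 hk.
apply: le_trans (split_at n L L0 NL (ltnW Nhm)) _.
rewrite mulrDl; apply: lerD.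
  apply: (ler_wpM2l K0); apply: le_trans (invXn_le_powR k n1 (ltW delta0) (ltW yL)) _.
  exact: ler_powR_natN.
rewrite -!mulrA; apply: (ler_wpM2l S0); apply: (ler_wpM2l KH0).
have z0 : 0 < z by apply: lt_le_trans zA2; have := ler0n R Nh; lra.
have z3m : z <= 3 * m%:R by lra.
apply: le_trans (powRN_le_of_le_mul z0 (ltr0Sn R 2) (ltW b0) z3m) _.
apply: (ler_wpM2l (powR_ge0 _ _)).
by rewrite /z -powRrM mulrN ler_powR_natN.
Qed.

Lemma expR_telescope a K (l : nat) : 0 < a ->
  K * expR (- (a * l%:R)) = K / (1 - expR (- a)) * expR (- (a * l%:R))
    - K / (1 - expR (- a)) * expR (- (a * l.+1%:R)).
Proof.
move=> a0; have r1 : expR (- a) < 1 by rewrite expR_lt1 oppr_lt0.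
rewrite -natr1 mulrDr mulr1 opprD expRD; field.
by rewrite subr_eq0 gt_eqF.
Qed.

Lemma invXn_telescope K (j L l : nat) : 0 <= K -> (1 <= L)%N -> (L <= l)%N ->
  K / l%:R ^+ j.+2
    <= 2 * K / (L%:R ^+ j * l%:R) - 2 * K / (L%:R ^+ j * l.+1%:R).
Proof.
move=> K0 L1 Ll.
have l1 : 1 <= l%:R :> R by rewrite ler1n (leq_trans L1 Ll).
have LJ : 0 < L%:R ^+ j :> R by rewrite exprn_gt0 // ltr0n.
have LJl : L%:R ^+ j <= l%:R ^+ j :> R by rewrite lerXn2r ?nnegrE ?ler_nat.
have -> : 2 * K / (L%:R ^+ j * l%:R) - 2 * K / (L%:R ^+ j * l.+1%:R)
    = K / (L%:R ^+ j * l%:R * (l%:R + 1) / 2).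
  by rewrite -natr1; field; rewrite !gt_eqF //; lra.
have l0 : 0 < l%:R :> R by lra.
have den0 : 0 < L%:R ^+ j * l%:R * (l%:R + 1) / 2 :> R.
  by rewrite divr_gt0 // !mulr_gt0 //; lra.
apply: (ler_wpM2l K0); rewrite lef_pV2 ?posrE ?exprn_gt0 //.
have w0 : 0 <= l%:R * (l%:R + 1) / 2 :> R by rewrite divr_ge0 // mulr_ge0 //; lra.
have h1 := ler_wpM2r w0 LJl.
have h2 : l%:R ^+ j * l%:R * ((l%:R + 1) / 2) <= l%:R ^+ j * l%:R * l%:R :> R.
  by rewrite ler_pM2l ?mulr_gt0 ?exprn_gt0 //; lra.
rewrite !exprS; lra.
Qed.

Definition tail_exponent beta eps : nat :=
  (Num.truncn ((beta + 1 + beta ^+ 2) / eps)).+2.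

Lemma tail_exponent_gt beta eps : 0 <= beta -> 0 < eps ->
  beta + 1 <= eps * (tail_exponent beta eps).-1%:R /\
  beta ^+ 2 <= eps * (tail_exponent beta eps)%:R.
Proof.
move=> b0 e0; rewrite /tail_exponent /=.
have := truncnS_gt ((beta + 1 + beta ^+ 2) / eps).
rewrite ltr_pdivrMr // mulrC => gt.
have b2 : 0 <= beta ^+ 2 by rewrite exprn_ge0.
have : eps * (Num.truncn ((beta + 1 + beta ^+ 2) / eps)).+1%:R
    <= eps * (Num.truncn ((beta + 1 + beta ^+ 2) / eps)).+2%:R.
  by rewrite ler_pM2l // ler_nat.
split; lra.
Qed.

End RealAsymptotics.

Section TelescopingSeries.
Variable R : realType.
Local Open Scope ereal_scope.

Lemma nneseries_le_telescope (u : nat -> \bar R) (w : nat -> R) (L : nat) :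
  (forall l, (L <= l)%N -> 0 <= u l <= (w l - w l.+1)%:E) ->
  (forall l, (L <= l)%N -> (0 <= w l)%R) ->
  \sum_(L <= l <oo) u l <= (w L)%:E.
Proof.
move=> u_le w0; apply: lime_le.
  by apply: is_cvg_ereal_nneg_natsum => l Ll; case/andP: (u_le l Ll).
apply: nearW => n; have [nL|Ln] := leqP n L; first by rewrite big_geq // lee_fin w0.
have partial k : \sum_(L <= l < L + k) u l <= (w L - w (L + k)%N)%:E.
  elim: k => [|k IH]; first by rewrite big_geq ?addn0 // subrr.
  rewrite addnS big_nat_recr /= ?leq_addr //.
  apply: le_trans (leeD IH (andP (u_le _ (leq_addr _ _))).2) _.
  by rewrite -EFinD lee_fin addrA subrK.
rewrite -(subnKC (ltnW Ln)); apply: le_trans (partial _) _.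
by rewrite lee_fin lerBlDr lerDl w0 // leq_addr.
Qed.

End TelescopingSeries.

Section TowerEstimates.
Context {d : measure_display} {M : measurableType d} {R : realType}.
Variables (mu : probability M R) (f : M -> M) (X Y : set M) (h : M -> nat)
  (alpha : set (set M)) (sigma : M -> nat) (muY : probability M R).
Hypothesis cmz : CMZ mu f X Y h alpha sigma muY.

Local Notation fX := (first_return_map f h).
Local Notation phi := (induced_return_time f h sigma).
Local Notation tower_mass := (\int[muY]_(y in Y) ((sigma y)%:R)%:E)%E.

Definition sigma_tail (L : nat) := [set y | Y y /\ (L < sigma y)%N].
Definition phi_tail (n : nat) := [set y | Y y /\ (n < phi y)%N].
Definition tower_level (m l : nat) :=
  [set y | Y y /\ (l < sigma y)%N /\ (m < h (iter l fX y))%N].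

Let measurable_f : measurable_fun setT f.
Proof. by case: cmz => -[]. Qed.

Let measurableX : measurable X. Proof. by case: cmz => _ []. Qed.

Let Y_sub_X : Y `<=` X. Proof. by case: cmz => _ []. Qed.

Let first_return x : X x ->
  [/\ (0 < h x)%N, X (iter (h x) f x) & forall k, (0 < k < h x)%N -> ~ X (iter k f x)].
Proof. by case: cmz => _ _ [ret _] _ _; exact: ret. Qed.

Let alpha_partition :
  [/\ countable alpha, forall a, alpha a -> measurable a /\ (0 < muY a)%E,
      trivIset alpha id & \bigcup_(a in alpha) a = Y].
Proof. by case: cmz => _ _ _ [_ _ _ [part _ _ _]] _. Qed.

Let sigma_gt0 y : Y y -> (0 < sigma y)%N.
Proof. by case: cmz => _ _ _ [pos _ _ _] _; exact: pos. Qed.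

Let sigma_alpha_const a : alpha a -> forall x y, a x -> a y -> sigma x = sigma y.
Proof. by case: cmz => _ _ _ [_ const _ _] _; exact: const. Qed.

Let h_alpha_const a : alpha a -> forall l x y, a x -> a y -> (l < sigma x)%N ->
  h (iter l fX x) = h (iter l fX y).
Proof. by case: cmz => _ _ _ _ [_ const]; exact: const. Qed.

Lemma iter_first_return_in l y : X y -> X (iter l fX y).
Proof.
move=> Xy; elim: l => //= l IH.
by have [] := first_return IH.
Qed.

Lemma measurable_iter k : measurable_fun setT (iter k f).
Proof.
elim: k => [|k IH] /=; first exact: measurable_id.
exact: measurableT_comp measurable_f IH.
Qed.

Lemma alpha_sub_Y a : alpha a -> a `<=` Y.
Proof. by case: alpha_partition => _ _ _ <- aa x ax; exists a. Qed.

(* a set saturated by [alpha] is a countable union of partition elements *)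
Lemma measurable_alpha_saturated (S : set M) : S `<=` Y ->
  (forall a, alpha a -> forall x y, a x -> a y -> S x -> S y) -> measurable S.
Proof.
move=> SY sat; case: alpha_partition => cnt alpha_meas _ alphaY.
have [g g_inj] := countable_injP _ cnt.
pose F n := \bigcup_(a in [set a | alpha a /\ g a = n /\ a `<=` S]) a.
have -> : S = \bigcup_n F n.
  apply/seteqP; split => [x Sx|x [n _ [a [_ [_ aS]] /aS //]]].
  have [a aa ax] : (\bigcup_(a in alpha) a) x by rewrite alphaY; exact: SY.
  exists (g a) => //; exists a => //.
  by split => //; split => // y ay; exact: sat a aa x y ax ay Sx.
apply: bigcupT_measurable => n.
have [[a0 [a0a [g0 a0S]]]|none] :=
  pselect (exists a, alpha a /\ g a = n /\ a `<=` S); last first.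
  suff -> : F n = set0 by exact: measurable0.
  by apply/seteqP; split => // x [a Pa _]; apply: none; exists a.
suff -> : F n = a0 by exact: (alpha_meas a0 a0a).1.
apply/seteqP; split => [x [a [aa [ga _]] ax]|x ax]; last by exists a0.
by rewrite (g_inj a0 a) ?inE // ga g0.
Qed.

Lemma phi_alpha_const a : alpha a -> forall x y, a x -> a y -> phi x = phi y.
Proof.
move=> aa x y ax ay; rewrite /induced_return_time -(sigma_alpha_const aa ax ay).
by apply: eq_bigr => l _; rewrite (h_alpha_const aa ax ay (ltn_ord l)).
Qed.

Lemma measurable_sigma_tail L : measurable (sigma_tail L).
Proof.
apply: measurable_alpha_saturated => [x [] //|a aa x y ax ay [_ Lx]].
by split; [exact: alpha_sub_Y ay | rewrite -(sigma_alpha_const aa ax ay)].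
Qed.

Lemma measurable_phi_tail n : measurable (phi_tail n).
Proof.
apply: measurable_alpha_saturated => [x [] //|a aa x y ax ay [_ nx]].
by split; [exact: alpha_sub_Y ay | rewrite -(phi_alpha_const aa ax ay)].
Qed.

Lemma measurable_tower_level m l : measurable (tower_level m l).
Proof.
apply: measurable_alpha_saturated => [x [] //|a aa x y ax ay [_ [lx mx]]].
split; first exact: alpha_sub_Y ay.
by rewrite -(sigma_alpha_const aa ax ay) -(h_alpha_const aa ax ay lx).
Qed.

Lemma fin_num_phi_tail n : muY (phi_tail n) \is a fin_num.
Proof. exact/fin_num_measure/measurable_phi_tail. Qed.

Lemma fin_num_sigma_tail L : muY (sigma_tail L) \is a fin_num.
Proof. exact/fin_num_measure/measurable_sigma_tail. Qed.

Lemma measurable_return_gt m : measurable ([set x | (m < h x)%N] `&` X).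
Proof.
have -> : [set x | (m < h x)%N] `&` X =
    X `&` \bigcap_(k in [set k | (0 < k <= m)%N]) (iter k f @^-1` (~` X)).
  apply/seteqP; split => [x [mh Xx]|x [Xx notX]].
    split => // k /= /andP[k0 km]; have [_ _] := first_return Xx; apply.
    by rewrite k0 (leq_ltn_trans km mh).
  split => //=; rewrite ltnNge; apply/negP => hm.
  have [h0 Xr _] := first_return Xx.
  by apply: (notX (h x)) => //=; rewrite h0 hm.
apply: measurableI => //; apply: bigcap_measurableType => k _.
by rewrite -[X in measurable X]setTI; apply: measurable_iter => //; exact: measurableC.
Qed.

Lemma tower_sum m : (tower_mass * cond_measure mu X [set x | (m < h x)%N])%E =
  (\sum_(0 <= l <oo) muY (tower_level m l))%E.
Proof.
case: cmz => _ _ _ _ [tower _].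
have -> : cond_measure mu X [set x | (m < h x)%N] =
    cond_measure mu X ([set x | (m < h x)%N] `&` X).
  by rewrite /cond_measure -setIA setIid.
rewrite tower; last exact: measurable_return_gt.
apply: eq_eseriesr => l _; congr (muY _).
apply/seteqP; split => [y [Yy [ly []]]|y [Yy [ly mh]]] //.
by split=> //; split=> //; split=> //; apply/iter_first_return_in/Y_sub_X.
Qed.

Lemma muY_Y : muY Y = 1%E.
Proof.
case: cmz => _ [_ mY _ _] _ [_ _ _ [_ [muY_notY _] _ _]] _.
rewrite -(probability_setT muY) -(setUv Y) measureU //= ?muY_notY ?adde0 //.
  exact: measurableC.
by rewrite setICr.
Qed.

Lemma tower_mass_fin : tower_mass \is a fin_num.
Proof.
case: cmz => _ _ _ [_ _ sigma_int _] _.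
by rewrite ge0_fin_numE // integral_ge0 // => y _; exact: lee0n.
Qed.

(* the base level [l = 0] of the tower over [{h > 0} = X] is all of [Y] *)
Lemma tower_mass_ge1 : (1 <= tower_mass)%E.
Proof.
case: cmz => _ [_ mY _ muY_gt0] _ _ _.
have muX_gt0 : (0 < mu X)%E.
  by apply: lt_le_trans muY_gt0 _; apply: le_measure; rewrite ?inE.
have muX_fin : mu X \is a fin_num by exact: fin_num_measure.
have cond_X : cond_measure mu X [set x | (0 < h x)%N] = 1%E.
  rewrite /cond_measure (_ : [set x | (0 < h x)%N] `&` X = X); last first.
    by apply/seteqP; split => [x []|x Xx] //; split => //; case: (first_return Xx).
  rewrite -[in X in (X * _)%E](fineK muX_fin) -EFinM mulfV //.
  by rewrite gt_eqF // fine_gt0 // muX_gt0 /= ltey_eq muX_fin.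
have := tower_sum 0; rewrite cond_X mule1 => ->.
apply: le_trans (nneseries_lim_ge 1 _) => //; rewrite big_nat1 -muY_Y.
have -> : tower_level 0 0 = Y; last by [].
apply/seteqP; split => [y [] //|y Yy]; split; [by []|split; first exact: sigma_gt0].
by case: (first_return (Y_sub_X Yy)).
Qed.

Lemma tower_level_sub_phi_tail m l : tower_level m l `<=` phi_tail m.
Proof.
move=> y [Yy [ly mh]]; split => //.
rewrite /induced_return_time (bigD1 (Ordinal ly)) //=.
exact: leq_trans mh (leq_addr _ _).
Qed.

Lemma le_phi_tail n n' : (n <= n')%N -> (muY (phi_tail n') <= muY (phi_tail n))%E.
Proof.
move=> nn'; apply: le_measure; rewrite ?inE; try exact: measurable_phi_tail.
by move=> y [Yy n'y]; split => //; exact: leq_ltn_trans nn' n'y.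
Qed.

Lemma return_tail_le_phi_tail m L :
  (tower_mass * cond_measure mu X [set x | (m < h x)%N] <=
   L%:R%:E * muY (phi_tail m) + \sum_(L <= l <oo) muY (sigma_tail l))%E.
Proof.
rewrite tower_sum (nneseries_split 0 L) => [|l _]; last exact: measure_ge0.
rewrite add0n; apply: leeD.
  apply: (@le_trans _ _ (\sum_(0 <= l < L) muY (phi_tail m))%E).
    apply: lee_sum => l _; apply: le_measure; rewrite ?inE;
      [exact: measurable_tower_level|exact: measurable_phi_tail|].
    exact: tower_level_sub_phi_tail.
  by rewrite -(fineK (fin_num_phi_tail m)) sumEFin sumr_const_nat subn0 -EFinM mulr_natl.
apply: lee_nneseries => [l _ _|l _]; first exact: measure_ge0.
apply: le_measure; rewrite ?inE; [exact: measurable_tower_level|exact: measurable_sigma_tail|].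
by move=> y [Yy [ly _]].
Qed.

Lemma phi_tail_le n L : (0 < L)%N ->
  (muY (phi_tail n) <=
   muY (sigma_tail L) + tower_mass * cond_measure mu X [set x | (n %/ L < h x)%N])%E.
Proof.
move=> L0; rewrite tower_sum.
have mU : measurable (\bigcup_l tower_level (n %/ L) l).
  by apply: bigcupT_measurable => l; exact: measurable_tower_level.
apply: (@le_trans _ _ (muY (sigma_tail L `|` \bigcup_l tower_level (n %/ L) l))).
  apply: le_measure; rewrite ?inE;
    [exact: measurable_phi_tail|exact: measurableU (measurable_sigma_tail L) mU|].
  move=> y [Yy ny]; have [Ly|sL] := ltnP L (sigma y); first by left.
  right; have [[l hl]|none] :=
    pselect (exists l : 'I_(sigma y), (n %/ L < h (iter l fX y))%N).
    by exists (nat_of_ord l) => //; split => //; split => //; exact: ltn_ord.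
  exfalso; move: ny; apply/negP; rewrite -leqNgt.
  apply: (@leq_trans (\sum_(l < sigma y) n %/ L)%N).
    by apply: leq_sum => l _; rewrite leqNgt; apply/negP => hl; apply: none; exists l.
  rewrite sum_nat_const card_ord; apply: leq_trans (leq_trunc_div n L).
  by rewrite mulnC leq_mul.
apply: le_trans (measureU2 _ _ _) _; [exact: measurable_sigma_tail|exact: mU|].
apply: leeD2l; apply: generalized_Boole_inequality => // l.
exact: measurable_tower_level.
Qed.

Lemma phi_tail_lower_split m L (B c : R) :
  (\sum_(L <= l <oo) muY (sigma_tail l) <= B%:E)%E -> 0 <= c ->
  (c%:E <= cond_measure mu X [set x | (m < h x)%N])%E ->
  c <= L%:R * fine (muY (phi_tail m)) + B.
Proof.
move=> tailB c0 hc; have cond_ge0 : (0 <= cond_measure mu X [set x | (m < h x)%N])%E.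
  by apply: le_trans hc; rewrite lee_fin.
rewrite -lee_fin EFinD EFinM fineK ?fin_num_phi_tail //.
apply: le_trans (leeD2l _ tailB); apply: le_trans (return_tail_le_phi_tail m L).
by apply: le_trans hc _; apply: lee_pemull tower_mass_ge1.
Qed.

Lemma phi_tail_upper_split n L (K : R) : (0 < L)%N ->
  (cond_measure mu X [set x | (n %/ L < h x)%N] <= K%:E)%E ->
  fine (muY (phi_tail n)) <= fine (muY (sigma_tail L)) + fine tower_mass * K.
Proof.
move=> L0 hK; rewrite -lee_fin EFinD EFinM.
rewrite !fineK ?tower_mass_fin ?fin_num_phi_tail ?fin_num_sigma_tail //.
apply: le_trans (phi_tail_le n L0) _; apply: leeD2l; apply: lee_wpmul2l hK.
by apply: le_trans tower_mass_ge1; rewrite lee_fin.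
Qed.

Lemma phi_tail_lower_log beta : 0 <= beta ->
  (exists a : R, 0 < a /\ exists (K : R) (N : nat), forall n, (N <= n)%N ->
     (muY (sigma_tail n) <= (K * expR (- (a * n%:R)))%:E)%E) ->
  (exists c : R, 0 < c /\ forall n, (1 <= n)%N ->
     ((c * n%:R `^ (- beta))%:E <= cond_measure mu X [set x | (n < h x)%N])%E) ->
  exists c' : R, 0 < c' /\ exists N : nat, forall n, (N <= n)%N ->
     ((c' * (ln n%:R)^-1 * n%:R `^ (- beta))%:E <= muY (phi_tail n))%E.
Proof.
move=> b0 [a [a0 [K [N sigma_exp]]]] [c [c0 h_lower]].
pose K1 := `|K| / (1 - expR (- a)).
have K1_ge0 : 0 <= K1 by rewrite divr_ge0 // subr_ge0 ltW // expR_lt1 oppr_lt0.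
have split_at n L : (1 <= n)%N -> (N <= L)%N ->
    c * n%:R `^ (- beta) <= L%:R * fine (muY (phi_tail n)) + K1 * expR (- (a * L%:R)).
  move=> n1 NL; apply: phi_tail_lower_split (h_lower n n1).
    apply: (nneseries_le_telescope (w := fun l => K1 * expR (- (a * l%:R)))) => l Ll;
      last by rewrite mulr_ge0 ?expR_ge0.
    rewrite measure_ge0 /= /K1 -expR_telescope //.
    apply: le_trans (sigma_exp l (leq_trans NL Ll)) _.
    by rewrite lee_fin ler_wpM2r ?expR_ge0 ?ler_norm.
  by rewrite mulr_ge0 ?powR_ge0 ?ltW.
have [c' [c'0 [N' lower]]] := lower_log_of_split a0 b0 c0 K1_ge0 split_at.
exists c'; split => //; exists N' => n nN'.
by rewrite -(fineK (fin_num_phi_tail n)) lee_fin; exact: lower.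
Qed.

Lemma phi_tail_upper_poly beta eps : 0 < beta -> 0 < eps ->
  (exists (K : R) (N : nat), forall n, (N <= n)%N ->
     (muY (sigma_tail n) <= (K * n%:R `^ (- (tail_exponent beta eps)%:R))%:E)%E) ->
  (exists (K : R) (N : nat), forall n, (N <= n)%N ->
     (cond_measure mu X [set x | (n < h x)%N] <= (K * n%:R `^ (- beta))%:E)%E) ->
  exists (K' : R) (N' : nat), forall n, (N' <= n)%N ->
     (muY (phi_tail n) <= (K' * n%:R `^ (- (beta - eps)))%:E)%E.
Proof.
move=> b0 e0 [K [N sigma_poly]] [KH [Nh h_upper]].
set k := tail_exponent beta eps.
have tower_mass_ge0 : 0 <= fine tower_mass.
  by apply: fine_ge0; apply: le_trans tower_mass_ge1; rewrite lee_fin.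
have split_at n L : (0 < L)%N -> (N <= L)%N -> (Nh <= n %/ L)%N ->
    fine (muY (phi_tail n)) <=
    `|K| / L%:R ^+ k + fine tower_mass * (`|KH| * (n %/ L)%:R `^ (- beta)).
  move=> L0 NL Nhm.
  apply: le_trans (phi_tail_upper_split (K := `|KH| * (n %/ L)%:R `^ (- beta)) L0 _) _.
    apply: le_trans (h_upper _ Nhm) _.
    by rewrite lee_fin ler_wpM2r ?powR_ge0 ?ler_norm.
  rewrite lerD2r -lee_fin fineK ?fin_num_sigma_tail //.
  apply: le_trans (sigma_poly L NL) _.
  by rewrite powR_invn // lee_fin ler_wpM2r ?invr_ge0 ?exprn_ge0 ?ler_norm.
have [_ hk] := tail_exponent_gt (ltW b0) e0.
have [K' [N' upper]] := upper_poly_of_split b0 e0 tower_mass_ge0 (normr_ge0 K) (normr_ge0 KH) hk split_at.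
exists K', N' => n nN'.
by rewrite -(fineK (fin_num_phi_tail n)) lee_fin; exact: upper.
Qed.

Lemma phi_tail_lower_poly beta eps : 0 <= beta -> 0 < eps ->
  (exists (K : R) (N : nat), forall n, (N <= n)%N ->
     (muY (sigma_tail n) <= (K * n%:R `^ (- (tail_exponent beta eps)%:R))%:E)%E) ->
  (exists c : R, 0 < c /\ forall n, (1 <= n)%N ->
     ((c * n%:R `^ (- beta))%:E <= cond_measure mu X [set x | (n < h x)%N])%E) ->
  exists c' : R, 0 < c' /\ forall n, (1 <= n)%N ->
     ((c' * n%:R `^ (- (beta + eps)))%:E <= muY (phi_tail n))%E.
Proof.
move=> b0 e0 [K [N sigma_poly]] [c [c0 h_lower]].
have [hk _] := tail_exponent_gt b0 e0.
move: hk sigma_poly; rewrite /tail_exponent /=.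
set j := Num.truncn _ => hk sigma_poly.
pose K2 := 2 * `|K|.
have split_at n L : (1 <= n)%N -> (maxn N 1 <= L)%N -> (0 < L)%N ->
    c * n%:R `^ (- beta) <= L%:R * fine (muY (phi_tail n)) + K2 / L%:R ^+ j.+1.
  move=> n1; rewrite geq_max => /andP[NL L1] _.
  apply: phi_tail_lower_split (h_lower n n1); last by rewrite mulr_ge0 ?powR_ge0 ?ltW.
  rewrite exprSr.
  apply: (nneseries_le_telescope (w := fun l => K2 / (L%:R ^+ j * l%:R))) => l Ll;
    last by rewrite divr_ge0 ?mulr_ge0 ?exprn_ge0.
  rewrite measure_ge0 /=; apply: le_trans (sigma_poly l (leq_trans NL Ll)) _.
  rewrite powR_invn // lee_fin; apply: le_trans (invXn_telescope _ _ L1 Ll).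
    by rewrite ler_wpM2r ?invr_ge0 ?exprn_ge0 ?ler_norm.
  exact: normr_ge0.
have [c1 [c10 [N1 lower]]] :=
  lower_poly_of_split e0 c0 (mulr_ge0 (ler0n R 2) (normr_ge0 K)) hk split_at.
have phi_anti : {homo (fun n => fine (muY (phi_tail n))) : m n / (m <= n)%N >-> n <= m}.
  by move=> m n mn; apply: fine_le; rewrite ?fin_num_phi_tail ?le_phi_tail.
have [c' [c'0 lower_all]] :=
  lower_bound_extend (addr_ge0 b0 (ltW e0)) c10 phi_anti lower.
exists c'; split => // n n1.
by rewrite -(fineK (fin_num_phi_tail n)) lee_fin; exact: lower_all.
Qed.

End TowerEstimates.

Theorem proposition5p1 (R : realType) (beta : R) (hbeta : 0 < beta) :
  (* (b) *)
  (forall (d : measure_display) (M : measurableType d) (mu : probability M R)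
          (f : M -> M) (X Y : set M) (h : M -> nat) (alpha : set (set M))
          (sigma : M -> nat) (muY : probability M R),
     CMZ mu f X Y h alpha sigma muY ->
     (exists a : R, 0 < a /\ exists (K : R) (N : nat), forall n, (N <= n)%N ->
        (muY [set y | Y y /\ (n < sigma y)%N] <= (K * expR (- (a * n%:R)))%:E)%E) ->
     (exists c : R, 0 < c /\ forall n, (1 <= n)%N ->
        ((c * n%:R `^ (- beta))%:E <= cond_measure mu X [set x | (n < h x)%N])%E) ->
     exists c' : R, 0 < c' /\ exists N : nat, forall n, (N <= n)%N ->
        ((c' * (ln n%:R)^-1 * n%:R `^ (- beta))%:E <=
           muY [set y | Y y /\ (n < induced_return_time f h sigma y)%N])%E)
  /\
  (forall eps : R, 0 < eps -> exists q : R, 1 < q /\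
    forall (d : measure_display) (M : measurableType d) (mu : probability M R)
           (f : M -> M) (X Y : set M) (h : M -> nat) (alpha : set (set M))
           (sigma : M -> nat) (muY : probability M R),
     CMZ mu f X Y h alpha sigma muY ->
     (exists (K : R) (N : nat), forall n, (N <= n)%N ->
        (muY [set y | Y y /\ (n < sigma y)%N] <= (K * n%:R `^ (- q))%:E)%E) ->
     (* (c) *)
     ((exists (K : R) (N : nat), forall n, (N <= n)%N ->
        (cond_measure mu X [set x | (n < h x)%N] <= (K * n%:R `^ (- beta))%:E)%E) ->
      exists (K' : R) (N' : nat), forall n, (N' <= n)%N ->
        (muY [set y | Y y /\ (n < induced_return_time f h sigma y)%N]
           <= (K' * n%:R `^ (- (beta - eps)))%:E)%E)
     /\
     (* (d) *)
     ((exists c : R, 0 < c /\ forall n, (1 <= n)%N ->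
        ((c * n%:R `^ (- beta))%:E <= cond_measure mu X [set x | (n < h x)%N])%E) ->
      exists c' : R, 0 < c' /\ forall n, (1 <= n)%N ->
        ((c' * n%:R `^ (- (beta + eps)))%:E <=
           muY [set y | Y y /\ (n < induced_return_time f h sigma y)%N])%E)).
Proof.
split.
  move=> d M mu f X Y h alpha sigma muY cmz.
  exact: (phi_tail_lower_log cmz (ltW hbeta)).
move=> eps eps0.
exists (tail_exponent beta eps)%:R; split; first by rewrite ltr1n.
move=> d M mu f X Y h alpha sigma muY cmz sigma_poly; split.
  exact: (phi_tail_upper_poly cmz hbeta eps0 sigma_poly).
exact: (phi_tail_lower_poly cmz (ltW hbeta) eps0 sigma_poly).
Qed.
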